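(* Let $T:\mathcal{H}\to Y$ be a linear operator from an infinite dimensional (real or complex) Hilbert space $\mathcal{H}$ to a Banach space $Y$. The following are equivalent: (i) $T$ is limited; (ii) $T$ maps every orthonormal subset of $\mathcal{H}$ onto a limited set; (iii) $T$ maps every orthonormal basis of $\mathcal{H}$ onto a limited set; (iv) $T$ maps every orthonormal sequence of $\mathcal{H}$ onto a limited set.
   Context: For a normed space $X$, $X'$ denotes its dual and $B_X$ its closed unit ball. A subset $A$ of a normed space $X$ is called limited if every weak$^*$-null sequence $(f_n)$ in $X'$ converges to zero uniformly on $A$, i.e. $\sup_{a\in A}|f_n(a)|\to 0$. A linear operator $T:X\to Y$ is limited if $T(B_X)$ is a limited subset of $Y$. *)

From HB Require Import structures.
From mathcomp Require Import all_boot all_order all_algebra.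
From mathcomp Require Import all_classical all_reals all_analysis.
From mathcomp Require Import complex.
Import numFieldNormedType.Exports.

Set Implicit Arguments.
Unset Strict Implicit.
Unset Printing Implicit Defensive.

Import Order.TTheory GRing.Theory Num.Theory.
Local Open Scope ring_scope.
Local Open Scope classical_set_scope.

(* Scalars K : numFieldType (instantiated in the statement with K = R, conj = id,
   and with K = R[i] = complex R, conj = complex conjugation). *)

Section Defs.
Variable K : numFieldType.

(* ip is an inner product on the normed space H which induces the norm of H:
   linear in the first argument, conjugate symmetric w.r.t. conj, and
   `|x|^2 = <x, x>` (which gives positive definiteness). *)
Definition is_inner_product (conj : K -> K) (H : normedModType K)
    (ip : H -> H -> K) : Prop :=
  [/\ forall (a : K) (x y z : H), ip (a *: x + y) z = a * ip x z + ip y z,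
      forall x y : H, ip y x = conj (ip x y)
    & forall x : H, `|x| ^+ 2 = ip x x].

Definition infinite_dimensional (H : lmodType K) : Prop :=
  ~ (exists s : seq H, forall x : H,
        exists c : nat -> K, x = \sum_(i < size s) c i *: s`_i).

Definition dual_elt (Y : normedModType K) (f : Y -> K^o) : Prop :=
  (forall (a : K) (u v : Y), f (a *: u + v) = a * f u + f v) /\ continuous f.

Definition weak_star_null (Y : normedModType K) (f : nat -> Y -> K^o) : Prop :=
  (forall n, dual_elt (f n)) /\ (forall y : Y, (fun n => f n y) @ \oo --> (0 : K^o)).

Definition limited_set (Y : normedModType K) (A : set Y) : Prop :=
  forall f : nat -> Y -> K^o, weak_star_null f ->
    forall eps : K, 0 < eps ->
      \forall n \near \oo, forall a, A a -> `|f n a| <= eps.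

Definition closed_unit_ball {X : normedModType K} : set X :=
  [set x | `|x| <= 1].

Definition limited_op (X Y : normedModType K) (T : X -> Y) : Prop :=
  limited_set (T @` closed_unit_ball (X:=X)).

Definition orthonormal (H : normedModType K) (ip : H -> H -> K) (S : set H) : Prop :=
  forall x y, S x -> S y -> ip x y = (if `[< x = y >] then 1 else 0).

Definition orthonormal_basis (H : normedModType K) (ip : H -> H -> K) (S : set H) : Prop :=
  orthonormal ip S /\
  (forall S' : set H, orthonormal ip S' -> S `<=` S' -> S' = S).

Definition orthonormal_seq (H : normedModType K) (ip : H -> H -> K) (e : nat -> H) : Prop :=
  forall n m, ip (e n) (e m) = (n == m)%:R.

Definition maps_orthonormal_sets_limited (H Y : normedModType K) (ip : H -> H -> K)
    (T : H -> Y) : Prop :=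
  forall S : set H, orthonormal ip S -> limited_set (T @` S).

Definition maps_orthonormal_bases_limited (H Y : normedModType K) (ip : H -> H -> K)
    (T : H -> Y) : Prop :=
  forall S : set H, orthonormal_basis ip S -> limited_set (T @` S).

Definition maps_orthonormal_seqs_limited (H Y : normedModType K) (ip : H -> H -> K)
    (T : H -> Y) : Prop :=
  forall e : nat -> H, orthonormal_seq ip e -> limited_set (T @` range e).

End Defs.

(* Orthonormal vectors lie in the unit ball, and every orthonormal set, e.g. the
   range of an orthonormal sequence, extends to a maximal one by Zorn's lemma;
   this gives (i) -> (ii) -> (iii) -> (iv).
   For (iv) -> (i), let (f_n) be weak*-null, d > 0, and |f_n (T x_n)| > d for
   infinitely many n and some x_n in the unit ball.  Given orthonormal
   e_0, ..., e_(k-1), the f_n (T e_i) tend to 0, so by Bessel's inequality the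
   component of x_n orthogonal to the e_i, normalised, is a unit vector e_k with
   |f_n (T e_k)| > d / 2 for some large n.  The orthonormal sequence built this
   way has a non-limited image. *)

From Pilot Require Import Defs.
From HB Require Import structures.
From mathcomp Require Import all_boot all_order all_algebra.
From mathcomp Require Import all_classical all_reals all_analysis.
From mathcomp Require Import complex.
Import numFieldNormedType.Exports.
Import Order.TTheory GRing.Theory Num.Theory.

Set Implicit Arguments.
Unset Strict Implicit.
Unset Printing Implicit Defensive.

(* Let the [orthonormal] of Defs take precedence over MathComp's notion for
   hermitian forms. *)
Import Defs.

Local Open Scope ring_scope.
Local Open Scope classical_set_scope.

Lemma dependent_choice_seq (A : Type) (P : seq A -> A -> Prop) :
  (forall s, exists a, P s a) -> exists e : nat -> A, forall k, P (mkseq e k) (e k).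
Proof.
move=> /choice[g gP].
pose fix hist k := if k is k'.+1 then rcons (hist k') (g (hist k')) else [::].
exists (fun k => g (hist k)) => k.
suff -> : mkseq (fun k => g (hist k)) k = hist k by [].
by elim: k => //= k IHk; rewrite mkseqS IHk.
Qed.

Definition linear_functional (K : numFieldType) (U : lmodType K) (g : U -> K^o)
    (g_lin : linear g) : {linear U -> K^o} :=
  HB.pack g (GRing.isLinear.Build K U K^o *:%R g g_lin).

Section LimitedSets.
Variables (K : numFieldType) (Y : normedModType K).

Lemma sub_limited_set (A B : set Y) : A `<=` B -> limited_set B -> limited_set A.
Proof.
move=> AB limB f f0 eps eps_gt0; apply: filterS (limB f f0 eps eps_gt0).
by move=> n fB a /AB; apply: fB.
Qed.

Lemma limited_setPn (A : set Y) :
  ~ limited_set A <->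
  exists2 f : nat -> Y -> K^o, weak_star_null f &
    exists2 d : K, 0 < d &
      forall N, exists2 n, (N <= n)%N & exists2 a, A a & d < `|f n a|.
Proof.
split=> [nlimA|[f f0 [d d_gt0 f_large]] limA].
  apply: contrapT => nf; apply: nlimA => f f0 d d_gt0.
  apply: contrapT => nev; apply: nf; exists f => //; exists d => // N.
  apply: contrapT => nN; apply: nev; exists N => // n /= Nn a Aa.
  rewrite real_leNgt ?normr_real ?gtr0_real //; apply/negP => fa.
  by apply: nN; exists n => //; exists a.
have [N _ fA] := limA f f0 d d_gt0.
have [n Nn [a Aa]] := f_large N.
by rewrite real_ltNge ?normr_real ?gtr0_real ?fA.
Qed.

Lemma weak_star_null_sum_le (f : nat -> Y -> K^o) (I : Type) (r : seq I)
    (y : I -> Y) (eps : K) :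
  weak_star_null f -> 0 < eps ->
  \forall n \near \oo, \sum_(i <- r) `|f n (y i)| <= eps.
Proof.
move=> [_ f0] eps_gt0.
have f0_norm i : `|f n (y i)| @[n --> \oo] --> (0 : K).
  by rewrite -(@normr0 _ K^o); apply: cvg_norm; exact: f0.
have := cvg_big (x0 := 0) (P := xpredT) (r := r) add_continuous eventually_filter
  (fun i _ => f0_norm i).
rewrite big1_eq => sum0.
apply: filterS (cvgr0_norm_le _ sum0 _ eps_gt0) => n.
by rewrite ger0_norm // sumr_ge0.
Qed.

End LimitedSets.

Section OrthonormalSets.
Variables (K : numFieldType) (H : normedModType K) (ip : H -> H -> K).

Lemma orthonormal_range (e : nat -> H) :
  orthonormal_seq ip e -> orthonormal ip (range e).
Proof.
move=> e_on _ _ [n _ <-] [m _ <-]; rewrite e_on.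
have [->|nm] := eqVneq n m; first by rewrite asboolT.
rewrite asboolF // => enm.
by have := e_on n m; rewrite enm e_on eqxx (negbTE nm) => /eqP; rewrite oner_eq0.
Qed.

(* Zorn's lemma is applied to the sets [A] with [S `|` A] orthonormal, so that
   the union of the empty chain is admissible. *)
Lemma orthonormal_basis_ext (S : set H) :
  orthonormal ip S -> exists2 B, orthonormal_basis ip B & S `<=` B.
Proof.
move=> S_on; pose P A := orthonormal ip (S `|` A).
have [A [PA A_max]] : exists A, P A /\ forall B, A `<` B -> ~ P B.
  apply: Zorn_bigcup => F FP F_chain x y.
  move=> [Sx|[X FX Xx]] [Sy|[Z FZ Zy]].
  - exact: S_on.
  - exact: (FP _ FZ) x y (or_introl Sx) (or_intror Zy).
  - exact: (FP _ FX) x y (or_intror Xx) (or_introl Sy).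
  - have [XZ|ZX] := F_chain _ _ FX FZ.
    + exact: (FP _ FZ) x y (or_intror (XZ _ Xx)) (or_intror Zy).
    + exact: (FP _ FX) x y (or_intror Xx) (or_intror (ZX _ Zy)).
exists (S `|` A) => //; split => // B B_on SA_B.
apply/seteqP; split => //; apply: contrapT => nB_SA.
apply: (A_max B); last by rewrite /P setUidr // => x Sx; apply: SA_B; left.
split=> [x Ax|BA]; first by apply: SA_B; right.
by apply: nB_SA => x /BA; right.
Qed.

End OrthonormalSets.

Section InnerProduct.
Variables (K : numFieldType) (conj : K -> K) (H : normedModType K) (ip : H -> H -> K).
Hypothesis ip_inner : is_inner_product conj ip.

Let ip_linearl (z : H) : linear (fun x => ip x z : K^o).
Proof. by move=> a x y; case: ip_inner => ->. Qed.

Let ipl (z : H) : {linear H -> K^o} := linear_functional (ip_linearl z).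

Lemma ip_conj x y : ip y x = conj (ip x y).
Proof. by case: ip_inner. Qed.

Lemma sqr_norm_ip x : `|x| ^+ 2 = ip x x.
Proof. by case: ip_inner. Qed.

Lemma ipZl a x z : ip (a *: x) z = a * ip x z.
Proof. by rewrite -[LHS]/(ipl z (a *: x)) linearZ. Qed.

Lemma ip_eq0_sym x y : ip x y = 0 -> ip y x = 0.
Proof.
have conj0 : conj 0 = 0 by rewrite -(linear0 (ipl 0)) -ip_conj.
by move=> xy0; rewrite ip_conj xy0.
Qed.

Definition orthonormal_list (s : seq H) : Prop :=
  forall i j, (i < size s)%N -> (j < size s)%N -> ip s`_i s`_j = (i == j)%:R.

Lemma orthonormal_list_rcons s e :
  orthonormal_list s -> ip e e = 1 -> (forall i, (i < size s)%N -> ip e s`_i = 0) ->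
  orthonormal_list (rcons s e).
Proof.
move=> s_on ee e_s i j; rewrite size_rcons !ltnS !nth_rcons.
rewrite leq_eqVlt => /orP[/eqP->|i_s]; rewrite leq_eqVlt => /orP[/eqP->|j_s];
  rewrite ?ltnn ?eqxx ?i_s ?j_s //.
- by rewrite gtn_eqF // e_s.
- by rewrite ltn_eqF //; apply/ip_eq0_sym/e_s.
- exact: s_on.
Qed.

Definition oproj (s : seq H) (x : H) : H := \sum_(i < size s) ip x s`_i *: s`_i.

Section Projection.
Variable s : seq H.
Hypothesis s_on : orthonormal_list s.

Lemma ip_oprojl x z : ip (oproj s x) z = \sum_(i < size s) ip x s`_i * ip s`_i z.
Proof.
rewrite -[LHS]/(ipl z (oproj s x)) linear_sum.
by apply: eq_bigr => i _; rewrite linearZ.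
Qed.

Lemma ip_sub_oprojl x j : (j < size s)%N -> ip (x - oproj s x) s`_j = 0.
Proof.
move=> j_s; rewrite -[LHS]/(ipl s`_j (x - oproj s x)) linearB /= ip_oprojl.
rewrite (bigD1 (Ordinal j_s)) //= s_on // eqxx mulr1 big1 ?addr0 ?subrr // => i.
by rewrite -val_eqE /= => /negbTE ij; rewrite s_on // ij mulr0.
Qed.

Hypothesis conj_norm : forall z, z * conj z = `|z| ^+ 2.

Lemma bessel_eq x :
  `|x - oproj s x| ^+ 2 = `|x| ^+ 2 - \sum_(i < size s) `|ip x s`_i| ^+ 2.
Proof.
set y := x - oproj s x.
have yy : ip y y = ip y x.
  have oproj_y : ip (oproj s x) y = 0.
    rewrite ip_oprojl big1 // => i _.
    by rewrite (ip_eq0_sym (ip_sub_oprojl x (ltn_ord i))) mulr0.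
  have yyx : ip y y = ip x y.
    by rewrite -[LHS]/(ipl y (x - oproj s x)) linearB /= oproj_y subr0.
  by rewrite (ip_conj x y) -yyx -ip_conj.
rewrite sqr_norm_ip yy -[LHS]/(ipl x y) linearB /= sqr_norm_ip ip_oprojl.
rewrite (eq_bigr (fun i : 'I_(size s) => `|ip x s`_i| ^+ 2)) // => i _.
by rewrite (ip_conj x) conj_norm.
Qed.

Lemma bessel_ineq x : \sum_(i < size s) `|ip x s`_i| ^+ 2 <= `|x| ^+ 2.
Proof. by rewrite -subr_ge0 -bessel_eq exprn_ge0. Qed.

Lemma norm_sub_oproj_le x : `|x - oproj s x| <= `|x|.
Proof.
rewrite -ler_sqr ?nnegrE // bessel_eq lerBlDr lerDl.
by rewrite sumr_ge0 // => i _; rewrite exprn_ge0.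
Qed.

Lemma norm_ip_orthonormal_le x (i : 'I_(size s)) : `|ip x s`_i| <= `|x|.
Proof.
rewrite -ler_sqr ?nnegrE //; apply: le_trans (bessel_ineq x).
by rewrite (bigD1 i) //= lerDl sumr_ge0 // => j _; rewrite exprn_ge0.
Qed.

Lemma norm_linear_oproj_le (phi : {linear H -> K^o}) x :
  `|phi (oproj s x)| <= `|x| * \sum_(i < size s) `|phi s`_i|.
Proof.
rewrite linear_sum mulr_sumr; apply: le_trans (ler_norm_sum _ _ _) _.
apply: ler_sum => i _; rewrite linearZ normrM.
by apply: ler_wpM2r => //; exact: norm_ip_orthonormal_le.
Qed.

End Projection.

Lemma ip_normalize y : y != 0 -> ip (`|y|^-1 *: y) (`|y|^-1 *: y) = 1.
Proof.
move=> y_neq0; rewrite -sqr_norm_ip normrZ normfV normr_id mulVf ?expr1n //.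
by rewrite normr_eq0.
Qed.

End InnerProduct.

Section OrthonormalExtension.
Variables (K : numFieldType) (conj : K -> K) (H Y : normedModType K).
Variables (ip : H -> H -> K) (T : {linear H -> Y}) (f : nat -> Y -> K^o) (d : K).
Hypothesis ip_inner : is_inner_product conj ip.
Hypothesis conj_norm : forall z, z * conj z = `|z| ^+ 2.
Hypothesis f0 : weak_star_null f.
Hypothesis d_gt0 : 0 < d.
Hypothesis f_large : forall N, exists2 n, (N <= n)%N &
  exists2 a, (T @` @closed_unit_ball K H) a & d < `|f n a|.

Let fT_linear n : linear (fun u => f n (T u) : K^o).
Proof. by move=> a u v; rewrite linearP; case: f0 => /(_ n) [->]. Qed.

Let fT n : {linear H -> K^o} := linear_functional (fT_linear n).

(* Subtracting from a unit vector [x] with [d < |f_n (T x)|] its projection on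
   [span s] costs at most [d / 2] once [n] is so large that the [f_n (T s_i)]
   are small; normalising the remainder only increases [|f_n (T _)|]. *)
Lemma orthonormal_list_ext s N : orthonormal_list ip s ->
  exists n e, [/\ (N <= n)%N, ip e e = 1,
    forall i, (i < size s)%N -> ip e s`_i = 0 & d / 2 < `|f n (T e)|].
Proof.
move=> s_on; have d2_gt0 : 0 < d / 2 by rewrite divr_gt0.
have [N0 _ fs_small] := weak_star_null_sum_le (index_enum 'I_(size s))
  (fun i => T s`_i) f0 d2_gt0.
have [n Nn [_ [x x_le1 <-] fx]] := f_large (maxn N N0).
set y := x - oproj ip s x.
have fy : d / 2 < `|fT n y|.
  have fproj : `|fT n (oproj ip s x)| <= d / 2.
    apply: le_trans (norm_linear_oproj_le ip_inner s_on conj_norm _ _) _.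
    rewrite -[d / 2]mul1r ler_pM ?sumr_ge0 //.
    exact: fs_small (leq_trans (leq_maxr _ _) Nn).
  rewrite linearB /=; apply: lt_le_trans (lerB_dist _ _).
  by apply: lt_le_trans (lerB (lexx _) fproj); rewrite ltrBrDr -splitr.
have y_neq0 : y != 0.
  apply: contraTneq fy => ->; rewrite linear0 normr0.
  by apply/negP => /(lt_trans d2_gt0); rewrite ltxx.
exists n, (`|y|^-1 *: y); split.
- exact: leq_trans (leq_maxl _ _) Nn.
- exact: (ip_normalize ip_inner y_neq0).
- by move=> i i_s; rewrite (ipZl ip_inner) (ip_sub_oprojl ip_inner s_on) ?mulr0.
- have y_le1 : `|y| <= 1.
    exact: le_trans (norm_sub_oproj_le ip_inner s_on conj_norm x) x_le1.
  rewrite -[X in _ < X]/(`|fT n (`|y|^-1 *: y)|) linearZ normrM.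
  rewrite ger0_norm ?invr_ge0 //; apply: lt_le_trans fy _.
  by rewrite ler_peMl // invf_ge1 // normr_gt0.
Qed.

Lemma exists_orthonormal_seq_not_limited :
  exists2 e : nat -> H, orthonormal_seq ip e & ~ limited_set (T @` range e).
Proof.
(* Each step also records its index [n]; a history that is not orthonormal gets
   an arbitrary step. *)
pose P (h : seq (nat * H)) (p : nat * H) := orthonormal_list ip (unzip2 h) ->
  [/\ (size h <= p.1)%N, ip p.2 p.2 = 1,
      forall i, (i < size h)%N -> ip p.2 (unzip2 h)`_i = 0
    & d / 2 < `|f p.1 (T p.2)|].
have [g gP] : exists g : nat -> nat * H, forall k, P (mkseq g k) (g k).
  apply: dependent_choice_seq => h.
  have [h_on|] := pselect (orthonormal_list ip (unzip2 h)); last by exists (0%N, 0).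
  have [n [e [hn ee e_h fe]]] := orthonormal_list_ext (size h) h_on.
  by exists (n, e) => _; split=> // i; rewrite -(size_map snd); exact: e_h.
pose e k := (g k).2.
have hist k : unzip2 (mkseq g k) = mkseq e k by rewrite /unzip2 /mkseq -map_comp.
have e_on k : orthonormal_list ip (mkseq e k).
  elim: k => [|k IHk]; first by case.
  have := gP k; rewrite /P hist size_mkseq => /(_ IHk) [_ ee e_k _].
  rewrite mkseqS; apply: (orthonormal_list_rcons ip_inner) => // i.
  by rewrite size_mkseq; exact: e_k.
exists e.
  move=> i j; have := e_on (maxn i j).+1 i j.
  by rewrite size_mkseq !nth_mkseq ?ltnS ?leq_maxl ?leq_maxr //; apply.
apply/limited_setPn; exists f => //; exists (d / 2); first by rewrite divr_gt0.
move=> N; have := gP N; rewrite /P hist size_mkseq => /(_ (e_on N)) [Nn _ _ fe].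
by exists (g N).1 => //; exists (T (e N)) => //; exists (e N) => //; exists N.
Qed.

End OrthonormalExtension.

Section Characterization.
Variables (K : numFieldType) (conj : K -> K) (H Y : normedModType K).
Variables (ip : H -> H -> K) (T : {linear H -> Y}).
Hypothesis ip_inner : is_inner_product conj ip.
Hypothesis conj_norm : forall z, z * conj z = `|z| ^+ 2.

Lemma limited_op_orthonormal_sets :
  limited_op T -> maps_orthonormal_sets_limited ip T.
Proof.
move=> limT S S_on; apply: sub_limited_set limT => _ [x Sx <-]; exists x => //.
rewrite /closed_unit_ball /= -(@expr_le1 _ 2) // (sqr_norm_ip ip_inner).
by rewrite (S_on x x Sx Sx) asboolT.
Qed.

Lemma orthonormal_bases_seqs_limited :
  maps_orthonormal_bases_limited ip T -> maps_orthonormal_seqs_limited ip T.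
Proof.
move=> limB e e_on; have [B B_basis eB] := orthonormal_basis_ext (orthonormal_range e_on).
by apply: sub_limited_set (limB B B_basis) => _ [x ex <-]; exists x => //; exact: eB.
Qed.

Lemma orthonormal_seqs_limited_op :
  maps_orthonormal_seqs_limited ip T -> limited_op T.
Proof.
move=> limE; apply: contrapT => /limited_setPn[f f0 [d d_gt0 f_large]].
have [e e_on] := exists_orthonormal_seq_not_limited ip_inner conj_norm f0 d_gt0 f_large.
by apply; exact: limE.
Qed.

Lemma limited_op_orthonormalP :
  [<-> limited_op T; maps_orthonormal_sets_limited ip T;
       maps_orthonormal_bases_limited ip T; maps_orthonormal_seqs_limited ip T].
Proof.
tfae.
- exact: limited_op_orthonormal_sets.
- by move=> limS S [S_on _]; exact: limS.
- exact: orthonormal_bases_seqs_limited.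
- exact: orthonormal_seqs_limited_op.
Qed.

End Characterization.

Theorem theorem8 :
  (* real Hilbert spaces *)
  (forall (R : realType) (H : completeNormedModType R) (ip : H -> H -> R)
          (Y : completeNormedModType R) (T : {linear H -> Y}),
     is_inner_product id ip -> infinite_dimensional H -> continuous T ->
     [<-> limited_op T;
          maps_orthonormal_sets_limited ip T;
          maps_orthonormal_bases_limited ip T;
          maps_orthonormal_seqs_limited ip T]) /\
  (* complex Hilbert spaces *)
  (forall (R : realType) (H : completeNormedModType R[i]) (ip : H -> H -> R[i])
          (Y : completeNormedModType R[i]) (T : {linear H -> Y}),
     is_inner_product (fun z => z^*) ip -> infinite_dimensional H -> continuous T ->
     [<-> limited_op T;
          maps_orthonormal_sets_limited ip T;
          maps_orthonormal_bases_limited ip T;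
          maps_orthonormal_seqs_limited ip T]).
Proof.
split=> R H ip Y T ip_inner _ _; apply: (limited_op_orthonormalP T ip_inner) => z /=.
- by rewrite real_normK ?num_real // expr2.
- by rewrite normCK.
Qed.
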